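(* Let $X$ be a finite set, let $N$ be a rooted phylogenetic network on $X$, and let $\widetilde{N}$ be its normalisation. Then: (a) $\widetilde{N}$ has no shortcuts, i.e. no arc $(u,v)$ such that $\widetilde{N}$ also contains a directed path of length at least $2$ from $u$ to $v$; (b) $\widetilde{N}$ is a rooted phylogenetic network on $X$.
   Context: A rooted phylogenetic network on a finite set $X$ is a finite acyclic directed graph $N$ with a single vertex of in-degree $0$ (the root $\rho$), all other vertices being of one of three types: (1) in-degree $1$ and out-degree $0$ (the leaves, which form exactly the set $X$); (2) in-degree $1$ and out-degree at least $2$; (3) out-degree $1$ and in-degree at least $2$ (reticulate vertices). A vertex $v$ of $N$ is visible if there is a leaf $x\in X$ such that every directed path from $\rho$ to $x$ passes through $v$; the root and all leaves are visible. Let $V_{\rm vis}(N)$ be the set of visible vertices. Define the directed graph ${\rm Cov}(N)$ with vertex set $V_{\rm vis}(N)$ as follows: for each pair $u\neq v$ of visible vertices such that $N$ has a directed path from $u$ to $v$, put an arc $(u,v)$; then delete every arc $(u,v)$ for which there is also a directed path of length at least $2$ from $u$ to $v$ in this graph (so ${\rm Cov}(N)$ is the Hasse diagram of the reachability partial order on $V_{\rm vis}(N)$). A vertex is subdividing if its in-degree and out-degree are both $1$. The normalisation $\widetilde{N}$ of $N$ is the directed graph obtained from ${\rm Cov}(N)$ by suppressing every subdividing vertex (i.e. replacing each maximal path whose interior vertices are subdividing by a single arc between its endpoints). *)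

(* A finite digraph is a relation E : rel V on a finType V,
   restricted to a vertex set W : {set V}. *)
From mathcomp Require Import all_boot.
From mathcomp Require Import boolp.
Set Implicit Arguments. Unset Strict Implicit. Unset Printing Implicit Defensive.

Section Defs.
Variable V : finType.

Definition indeg (E : rel V) (v : V) : nat := #|[set u | E u v]|.
Definition outdeg (E : rel V) (v : V) : nat := #|[set w | E v w]|.

Definition network (W : {set V}) (E : rel V) (X : {set V}) (r : V) : Prop :=
  [/\ (forall u v, E u v -> (u \in W) && (v \in W)),
      (forall u v, E u v -> ~~ connect E v u),
      r \in W /\ indeg E r = 0,
      (forall v, v \in W -> v != r ->
         [\/ indeg E v = 1 /\ outdeg E v = 0,
             indeg E v = 1 /\ 2 <= outdeg E v
           | outdeg E v = 1 /\ 2 <= indeg E v]) &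
      (forall v, v \in X <->
         [/\ v \in W, v != r, indeg E v = 1 & outdeg E v = 0])].

(* directed paths from r given as r :: p *)
Definition visible (E : rel V) (X : {set V}) (r v : V) : Prop :=
  [\/ v = r, v \in X |
      exists2 x, x \in X &
        forall p : seq V, path E r p -> last r p = x -> v \in r :: p].

Definition reachV (E : rel V) (X : {set V}) (r : V) : rel V :=
  fun u v => [&& `[< visible E X r u >], `[< visible E X r v >],
                 u != v & connect E u v].

Definition Cov (E : rel V) (X : {set V}) (r : V) : rel V :=
  fun u v => reachV E X r u v &&
    ~~ [exists w, [exists w', [&& reachV E X r u w,
                                  connect (reachV E X r) w w' &
                                  reachV E X r w' v]]].

Definition subdividing (E : rel V) (X : {set V}) (r v : V) : bool :=
  (indeg (Cov E X r) v == 1) && (outdeg (Cov E X r) v == 1).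

Definition normW (E : rel V) (X : {set V}) (r : V) : {set V} :=
  [set v | `[< visible E X r v >] && ~~ subdividing E X r v].

Definition suppressed_path (E : rel V) (X : {set V}) (r u : V) (q : seq V) (v : V)
  : bool :=
  path (Cov E X r) u (rcons q v) && all (subdividing E X r) q.

Definition Ntil (E : rel V) (X : {set V}) (r : V) : rel V :=
  fun u v => [&& u \in normW E X r, v \in normW E X r &
    [exists w, Cov E X r u w &&
       connect (fun x y => subdividing E X r x && Cov E X r x y) w v]].

Definition no_shortcuts (E : rel V) : Prop :=
  forall u v, E u v ->
    ~~ [exists w, [exists w', [&& E u w, connect E w w' & E w' v]]].

End Defs.

From mathcomp Require Import all_boot boolp.
Set Implicit Arguments. Unset Strict Implicit. Unset Printing Implicit Defensive.

(* The visible vertices, ordered by reachability, form a strict order whose Hasse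
   diagram is Cov(N); the normalisation replaces every maximal chain of subdividing
   vertices of Cov(N) by a single arc.  Two observations carry the proof.

   A subdividing vertex has exactly one Cov-parent and one Cov-child, so a path
   through subdividing vertices is determined by its first vertex, and also by its
   last one, up to the first non-subdividing vertex it meets.

   If a leaf x witnesses the visibility of a subdividing vertex c, then x lies below
   the whole chain starting at c, and every vertex w from which the end of the chain
   is reachable is comparable with c, because the root-to-x paths through w pass
   through c.  Hence no visible non-subdividing vertex lies strictly between the
   ends of a suppressed path, which gives (a), and distinct Cov-arcs at a
   non-subdividing vertex yield distinct arcs of the normalisation.

   Finally, the parent of a tree vertex is its unique Cov-parent and the child of a
   reticulation its unique Cov-child; being non-subdividing, such a vertex has at
   least two Cov-arcs on the other side, and these degrees pass to the
   normalisation. *)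

Section Paths.
Variables (T : eqType) (e : rel T).

Lemma path_mem_in_arc a p v :
  path e a p -> v \in a :: p -> v != a -> exists2 u, u \in a :: p & e u v.
Proof.
elim: p a => [|y p IH] a /=; first by move=> _; rewrite inE => /eqP ->; rewrite eqxx.
case/andP=> eay yp; rewrite inE => /predU1P[->|vp]; first by rewrite eqxx.
have [-> _|vy _] := eqVneq v y; first by exists a; rewrite ?mem_head.
by have [u up euv] := IH y yp vp vy; exists u; rewrite // inE up orbT.
Qed.

Lemma path_mem_out_arc a p v :
  path e a p -> v \in a :: p -> v != last a p -> exists2 w, w \in p & e v w.
Proof.
elim: p a => [|y p IH] a /=; first by move=> _; rewrite inE => /eqP ->; rewrite eqxx.
case/andP=> eay yp; rewrite inE => /predU1P[-> _|vp vl]; first by exists y; rewrite ?mem_head.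
by have [w wp evw] := IH y yp vp vl; exists w; rewrite // inE wp orbT.
Qed.

Lemma path_rcons_src (s : pred T) x p y :
  path (fun a b => s a && e a b) x (rcons p y) = all s (x :: p) && path e x (rcons p y).
Proof. by elim: p x => [|z p IH] x /=; rewrite ?andbT // IH andbACA. Qed.

Lemma path_rcons_rev x p y :
  path e x (rcons p y) = path [rel a b | e b a] y (rcons (rev p) x).
Proof.
have := rev_path [rel a b | e b a] x (rcons p y).
by rewrite last_rcons belast_rcons rev_cons => ->.
Qed.

Lemma path_determined (s : pred T) x p1 p2 y1 y2 :
  {in x :: p1, forall a b b', e a b -> e a b' -> b = b'} ->
  path e x (rcons p1 y1) -> path e x (rcons p2 y2) ->
  all s p1 -> all s p2 -> ~~ s y1 -> ~~ s y2 -> p1 = p2 /\ y1 = y2.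
Proof.
elim: p1 x p2 => [|z1 p1 IH] x [|z2 p2] /= e_det; have x_det := e_det x (mem_head _ _).
- by move=> /andP[xy1 _] /andP[xy2 _]; rewrite (x_det _ _ xy1 xy2).
- move=> /andP[xy1 _] /andP[xz2 _] _ /andP[z2s _] y1s _.
  by rewrite (x_det _ _ xy1 xz2) z2s in y1s.
- move=> /andP[xz1 _] /andP[xy2 _] /andP[z1s _] _ _ y2s.
  by rewrite (x_det _ _ xy2 xz1) z1s in y2s.
move=> /andP[xz1 z1p1] /andP[xz2 z2p2] /andP[_ p1s] /andP[_ p2s] y1s y2s.
have eq_z := x_det _ _ xz1 xz2; rewrite -eq_z in z2p2 *.
have z1_det : {in z1 :: p1, forall a b b', e a b -> e a b' -> b = b'}.
  by move=> a a_p; apply: e_det; rewrite inE a_p orbT.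
by have [-> ->] := IH z1 p2 z1_det z1p1 z2p2 p1s p2s y1s y2s.
Qed.

End Paths.

Section FiniteRelations.
Variable T : finType.
Implicit Types (e : rel T) (P : pred T).

Lemma connect_first_step e x y :
  connect e x y -> x != y -> exists2 z, e x z & connect e z y.
Proof.
move=> /connectP[[|z p] /= exy ->]; first by rewrite eqxx.
by case/andP: exy => exz ezp _; exists z => //; apply/connectP; exists p.
Qed.

Lemma connect_last_step e x y :
  connect e x y -> x != y -> exists2 z, connect e x z & e z y.
Proof.
move=> /connectP[p]; elim/last_ind: p => [|p z _] /=; first by move=> _ ->; rewrite eqxx.
rewrite rcons_path last_rcons => /andP[exp ez] -> _.
by exists (last x p) => //; apply/connectP; exists p.
Qed.

Lemma connect_from_sink e x y : (forall z, e x z = false) -> connect e x y -> y = x.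
Proof.
move=> sink_x exy; case: (eqVneq x y) => [//|/(connect_first_step exy)[z]].
by rewrite sink_x.
Qed.

Lemma connect_to_source e x y : (forall z, e z y = false) -> connect e x y -> x = y.
Proof.
move=> source_y exy; case: (eqVneq x y) => [//|/(connect_last_step exy)[z _]].
by rewrite source_y.
Qed.

Lemma connect_mem_last e a p c : path e a p -> c \in a :: p -> connect e c (last a p).
Proof.
elim: p a => [|y p IH] a /=; first by move=> _; rewrite inE => /eqP ->.
case/andP=> eay yp; rewrite inE => /predU1P[->|/IH-> //].
by apply: connect_trans (connect1 eay) _; apply: (path_connect yp); apply: mem_last.
Qed.

Definition acyclic e := forall x y, e x y -> ~~ connect e y x.

Lemma acyclic_rev e : acyclic e -> acyclic [rel x y | e y x].
Proof. by move=> e_acyc x y /= eyx; rewrite connect_rev; apply: e_acyc. Qed.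

Lemma acyclic_sub e e' : subrel e e' -> acyclic e' -> acyclic e.
Proof.
move=> ee' e'_acyc x y /ee' /e'_acyc; apply: contra.
by apply: connect_sub => a b /ee' /connect1.
Qed.

Lemma acyclic_connect_antisym e x y :
  acyclic e -> connect e x y -> connect e y x -> x = y.
Proof.
move=> e_acyc exy eyx; case: (eqVneq x y) => [//|/(connect_first_step exy)[z exz ezy]].
by move: (e_acyc _ _ exz); rewrite (connect_trans ezy eyx).
Qed.

Lemma acyclic_ind e : acyclic e -> forall P : T -> Prop,
  (forall x, (forall y, e y x -> P y) -> P x) -> forall x, P x.
Proof.
move=> e_acyc P IH x; have [n] := ubnP #|[set z | connect e z x]|.
elim: n x => // n IHn x lt_x; apply: IH => y eyx; apply: IHn.
rewrite -ltnS; apply: leq_trans lt_x; apply: proper_card; apply/properP; split.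
  by apply/subsetP => z; rewrite !inE => /connect_trans; apply; apply: connect1.
by exists x; rewrite !inE ?connect0 ?e_acyc.
Qed.

Lemma card_set_eq0P P : reflect (forall x, P x = false) (#|[set x | P x]| == 0).
Proof.
rewrite cards_eq0; apply: (iffP eqP) => [P0 x|P0].
  by have := in_set0 x; rewrite -P0 inE.
by apply/setP => x; rewrite !inE P0.
Qed.

Lemma card_set_eq1P P :
  reflect (exists2 c, P c & forall x, P x -> x = c) (#|[set x | P x]| == 1).
Proof.
apply: (iffP cards1P) => [[c Pc]|[c Pc Puniq]]; exists c.
- by have := set11 c; rewrite -Pc inE.
- by move=> x Px; apply/set1P; rewrite -Pc inE.
- by apply/setP => x; rewrite !inE; apply/idP/eqP => [/Puniq|->].
Qed.

Lemma card_set_gt0P P : reflect (exists x, P x) (0 < #|[set x | P x]|).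
Proof. by apply: (iffP card_gt0P) => [[x]|[x]] Px; exists x; rewrite ?inE in Px *. Qed.

Lemma card_set_gt1P P :
  reflect (exists x y, [/\ P x, P y & x != y]) (1 < #|[set x | P x]|).
Proof.
by apply: (iffP card_gt1P) => [[x [y]]|[x [y]]] [Px Py xy]; exists x, y; rewrite ?inE in Px Py *.
Qed.

Lemma indeg0P e v : reflect (forall u, e u v = false) (indeg e v == 0).
Proof. exact: card_set_eq0P. Qed.

Lemma outdeg0P e v : reflect (forall w, e v w = false) (outdeg e v == 0).
Proof. exact: card_set_eq0P. Qed.

Lemma indeg1P e v :
  reflect (exists2 p, e p v & forall u, e u v -> u = p) (indeg e v == 1).
Proof. exact: card_set_eq1P. Qed.

Lemma outdeg1P e v :
  reflect (exists2 c, e v c & forall w, e v w -> w = c) (outdeg e v == 1).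
Proof. exact: card_set_eq1P. Qed.

Lemma indeg_gt0P e v : reflect (exists u, e u v) (0 < indeg e v).
Proof. exact: card_set_gt0P. Qed.

Lemma outdeg_gt0P e v : reflect (exists w, e v w) (0 < outdeg e v).
Proof. exact: card_set_gt0P. Qed.

Lemma indeg_gt1P e v :
  reflect (exists u1 u2, [/\ e u1 v, e u2 v & u1 != u2]) (1 < indeg e v).
Proof. exact: card_set_gt1P. Qed.

Lemma outdeg_gt1P e v :
  reflect (exists w1 w2, [/\ e v w1, e v w2 & w1 != w2]) (1 < outdeg e v).
Proof. exact: card_set_gt1P. Qed.

End FiniteRelations.

(** * Hasse diagrams of strict orders *)

Section HasseDiagram.
Variables (T : finType) (R : rel T).
Hypotheses (R_irr : irreflexive R) (R_trans : transitive R).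

Definition hasse : rel T := fun u v =>
  R u v && ~~ [exists w, [exists w', [&& R u w, connect R w w' & R w' v]]].

Lemma connect_sub_strict (Q : rel T) x y :
  subrel Q R -> connect Q x y -> x = y \/ R x y.
Proof.
move=> QR /connectP[p]; elim: p x => [|z p IH] x /=; first by move=> _ ->; left.
case/andP=> /QR Rxz /IH/[apply][[<-|Rzy]]; right => //.
exact: R_trans Rxz Rzy.
Qed.

Lemma connect_strict x y : connect R x y -> x = y \/ R x y.
Proof. exact: connect_sub_strict. Qed.

Lemma strict_acyclic : acyclic R.
Proof.
move=> x y Rxy; apply/negP => /connect_strict [yx|Ryx].
  by move: Rxy; rewrite yx R_irr.
by move: (R_trans Rxy Ryx); rewrite R_irr.
Qed.

Lemma hasse_sub : subrel hasse R.
Proof. by move=> u v /andP[]. Qed.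

Lemma hasse_no_between u v w : hasse u v -> R u w -> R w v -> False.
Proof.
case/andP=> _ /existsPn/(_ w)/existsPn/(_ w) + Ruw Rwv.
by rewrite Ruw Rwv connect0.
Qed.

Lemma hasse_between u v : R u v -> ~~ hasse u v -> exists2 w, R u w & R w v.
Proof.
rewrite /hasse => -> /negbNE/existsP[w /existsP[w' /and3P[Ruw ww' Rw'v]]].
exists w => //; case: (connect_strict ww') => [-> //|Rww'].
exact: R_trans Rww' Rw'v.
Qed.

Lemma hasse_intro u v : R u v -> (forall w, R u w -> R w v -> False) -> hasse u v.
Proof.
move=> Ruv no_between; apply/negPn/negP => /(hasse_between Ruv)[w].
exact: no_between.
Qed.

Lemma hasse_first_step u y : R u y -> exists2 d, hasse u d & (d = y \/ R d y).
Proof.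
elim/(acyclic_ind strict_acyclic): y => y IH Ruy.
have [uy|/(hasse_between Ruy)[w Ruw Rwy]] := boolP (hasse u y); first by exists y => //; left.
have [d ud dw] := IH w Rwy Ruw; exists d => //; right.
by case: dw => [->|Rdw] //; apply: R_trans Rdw Rwy.
Qed.

Lemma hasse_last_step y u : R y u -> exists2 d, hasse d u & (d = y \/ R y d).
Proof.
have R'_acyc : acyclic [rel a b | R b a] by apply: acyclic_rev strict_acyclic.
elim/(acyclic_ind R'_acyc): y => y IH Ryu.
have [yu|/(hasse_between Ryu)[w Ryw Rwu]] := boolP (hasse y u); first by exists y => //; left.
have [d du wd] := IH w Ryw Rwu; exists d => //; right.
by case: wd => [->|Rwd] //; apply: R_trans Ryw Rwd.
Qed.

End HasseDiagram.

(** * Visibility and the covering relation *)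

Section Normalisation.
Variables (V : finType) (E : rel V) (X : {set V}) (r : V).
Hypothesis HN : network [set: V] E X r.

Local Notation vis v := (`[< visible E X r v >]).
Local Notation R := (reachV E X r).
Local Notation C := (Cov E X r).
Local Notation sub := (subdividing E X r).
Local Notation step := (fun x y : V => subdividing E X r x && Cov E X r x y).
Local Notation W := (normW E X r).
Local Notation Nt := (Ntil E X r).
Local Notation spath := (suppressed_path E X r).

Lemma network_acyclic : acyclic E.
Proof. by case: HN. Qed.

Lemma network_parent v : v != r -> exists u, E u v.
Proof.
case: HN => _ _ _ types _ /(types v (in_setT v)) vtype; apply/indeg_gt0P.
by case: vtype => [[-> _]|[-> _]|[_ /ltnW]].
Qed.

Lemma connect_from_root v : connect E r v.
Proof.
elim/(acyclic_ind network_acyclic): v => v IH.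
have [-> //|/network_parent[u Euv]] := eqVneq v r.
exact: connect_trans (IH u Euv) (connect1 Euv).
Qed.

Lemma root_source u : E u r = false.
Proof. by case: HN => _ _ [_ /eqP/indeg0P]. Qed.

Lemma leaf_degrees x : x \in X -> indeg E x = 1 /\ outdeg E x = 0.
Proof. by case: HN => _ _ _ _ leaves /leaves[]. Qed.

Lemma leaf_sink x : x \in X -> forall y, E x y = false.
Proof. by case/leaf_degrees=> _ /eqP/outdeg0P. Qed.

Lemma leaf_neq_root x : x \in X -> x != r.
Proof. by case: HN => _ _ _ _ leaves /leaves[]. Qed.

Definition visible_via c x :=
  x \in X /\ forall p, path E r p -> last r p = x -> c \in r :: p.

Lemma visible_root : vis r.
Proof. exact/asboolP/Or31. Qed.

Lemma visible_leaf x : x \in X -> vis x.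
Proof. by move=> xX; apply/asboolP/Or32. Qed.

Lemma visible_via_visible c x : visible_via c x -> vis c.
Proof. by case=> xX cx; apply/asboolP/Or33; exists x. Qed.

Lemma visible_viaP c : vis c -> c != r -> exists x, visible_via c x.
Proof.
move/asboolP=> [->|cX|[x xX cx]]; rewrite ?eqxx // => _; last by exists x.
by exists c; split=> // p _ <-; apply: mem_last.
Qed.

Lemma visible_via_connect c x : visible_via c x -> connect E c x.
Proof.
case=> _ cx; have /connectP[p rp x_last] := connect_from_root x.
by rewrite x_last; apply: (connect_mem_last rp); apply: cx rp (esym x_last).
Qed.

(* c lies on the concatenation of a root-to-w path and a w-to-x path. *)
Lemma visible_via_comparable c x w :
  visible_via c x -> connect E w x -> connect E w c \/ connect E c w.
Proof.
case=> _ cx /connectP[q wq x_last].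
have /connectP[p rp w_last] := connect_from_root w.
have : c \in r :: p ++ q.
  by apply: cx; rewrite ?cat_path ?rp -?w_last ?wq // last_cat -w_last.
rewrite -cat_cons mem_cat => /orP[cp|cq]; first by right; rewrite w_last (connect_mem_last rp).
by left; apply: (path_connect wq); rewrite inE cq orbT.
Qed.

Lemma reachP u v : reflect [/\ vis u, vis v, u != v & connect E u v] (R u v).
Proof. exact: and4P. Qed.

Lemma reach_connect : subrel R (connect E).
Proof. by move=> u v /reachP[]. Qed.

Lemma reach_irr : irreflexive R.
Proof. by move=> u; apply/reachP; case; rewrite eqxx. Qed.

Lemma reach_trans : transitive R.
Proof.
move=> v u w /reachP[uV _ uv Euv] /reachP[_ wV _ Evw]; apply/reachP.
split=> //; last exact: connect_trans Euv Evw.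
apply: contraNneq uv => uw; rewrite uw in Euv *.
by rewrite (acyclic_connect_antisym network_acyclic Evw Euv).
Qed.

Lemma reach_from_sink v w : (forall y, E v y = false) -> R v w = false.
Proof.
move=> v_sink; apply/negP => Rvw; move: (Rvw).
by rewrite (connect_from_sink v_sink (reach_connect Rvw)) reach_irr.
Qed.

Lemma reach_to_root u : R u r = false.
Proof.
apply/negP => Rur; move: (Rur).
by rewrite (connect_to_source root_source (reach_connect Rur)) reach_irr.
Qed.

Lemma reach_acyclic : acyclic R.
Proof. exact: strict_acyclic reach_irr reach_trans. Qed.

(* [C] unfolds to [hasse R]. *)
Lemma cov_reach : subrel C R.
Proof. exact: hasse_sub. Qed.

Lemma cov_no_between u v w : C u v -> R u w -> R w v -> False.
Proof. exact: hasse_no_between. Qed.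

Lemma cov_intro u v : R u v -> (forall w, R u w -> R w v -> False) -> C u v.
Proof. exact: (@hasse_intro _ R reach_trans). Qed.

Lemma cov_first_step u v : R u v -> exists2 w, C u w & (w = v \/ R w v).
Proof. exact: (@hasse_first_step _ R reach_irr reach_trans). Qed.

Lemma cov_last_step u v : R u v -> exists2 w, C w v & (w = u \/ R u w).
Proof. exact: (@hasse_last_step _ R reach_irr reach_trans). Qed.

Lemma cov_visible u v : C u v -> vis u /\ vis v.
Proof. by move/cov_reach/reachP => []. Qed.

(** * Chains of subdividing vertices *)

Lemma subdividing_parent c : sub c -> exists2 p, C p c & forall u, C u c -> u = p.
Proof. by case/andP=> /indeg1P. Qed.

Lemma subdividing_child c : sub c -> exists2 d, C c d & forall w, C c w -> w = d.
Proof. by case/andP=> _ /outdeg1P. Qed.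

Lemma root_not_subdividing : ~~ sub r.
Proof. by apply/negP => /subdividing_parent[p /cov_reach]; rewrite reach_to_root. Qed.

Lemma leaf_not_subdividing x : x \in X -> ~~ sub x.
Proof.
move/leaf_sink=> x_sink; apply/negP => /subdividing_child[d /cov_reach].
by rewrite reach_from_sink.
Qed.

Lemma mem_normW v : (v \in W) = vis v && ~~ sub v.
Proof. by rewrite inE. Qed.

Lemma normW_visible v : v \in W -> vis v.
Proof. by rewrite mem_normW => /andP[]. Qed.

Lemma normW_not_subdividing v : v \in W -> ~~ sub v.
Proof. by rewrite mem_normW => /andP[]. Qed.

Lemma subdividing_visible c : sub c -> vis c.
Proof. by case/subdividing_parent=> p /cov_visible[]. Qed.

Lemma subdividing_visible_via c : sub c -> exists x, visible_via c x.
Proof.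
move=> c_sub; apply: visible_viaP (subdividing_visible c_sub) _.
by apply: contraTneq c_sub => ->; apply: root_not_subdividing.
Qed.

Lemma step_reach x y z : step x y -> R x z -> y = z \/ R y z.
Proof.
case/andP=> x_sub xy /cov_first_step[d xd dz].
have [c _ c_uniq] := subdividing_child x_sub.
by rewrite (c_uniq _ xy) -(c_uniq _ xd).
Qed.

Lemma step_sub : subrel step R.
Proof. by move=> x y /andP[_ /cov_reach]. Qed.

Lemma connect_step_reach a b : connect step a b -> a = b \/ R a b.
Proof. by apply: connect_sub_strict step_sub; apply: reach_trans. Qed.

Lemma connect_stepP a b : connect step a b -> a = b \/ sub a /\ R a b.
Proof.
move=> ab; have [->|a_b] := eqVneq a b; [by left | right].
have [y /andP[a_sub _] _] := connect_first_step ab a_b; split=> //.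
by case: (connect_step_reach ab) => // eq_ab; rewrite eq_ab eqxx in a_b.
Qed.

Lemma chain_below_witness c v :
  sub c -> connect step c v -> exists x, visible_via c x /\ connect E v x.
Proof.
move=> c_sub cv; have [x cx] := subdividing_visible_via c_sub; exists x; split=> //.
suff : v = x \/ R v x by case=> [->|/reach_connect].
have xX := cx.1; move/connectP: cv => [p + ->].
have : c = x \/ R c x.
  right; apply/reachP; split; [exact: subdividing_visible|exact: visible_leaf| |].
    by apply: contraTneq c_sub => ->; apply: leaf_not_subdividing.
  exact: visible_via_connect.
elim: p c {c_sub cx} => [|y p IH] c //= [->|Rcx] /andP[cy yp]; apply: IH yp.
  by move: cy; rewrite /= (negbTE (leaf_not_subdividing xX)).
exact: step_reach cy Rcx.
Qed.

Lemma chain_comparable c v w :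
  sub c -> connect step c v -> vis w -> w != c -> connect E w v -> R w c \/ R c w.
Proof.
move=> c_sub cv wV w_c Ewv; have [x [cx vx]] := chain_below_witness c_sub cv.
have cV := subdividing_visible c_sub.
case: (visible_via_comparable cx (connect_trans Ewv vx)) => [Ewc|Ecw].
  by left; apply/reachP.
by right; apply/reachP; rewrite eq_sym.
Qed.

Lemma cov_chains_merge u w1 w2 v :
  C u w1 -> C u w2 -> connect step w1 v -> connect step w2 v -> w1 = w2.
Proof.
move=> uw1 uw2 w1v w2v.
case: (connect_stepP w1v) => [eq_w1v|[w1_sub Rw1v]].
  case: (connect_stepP w2v) => [-> //|[_ Rw2v]].
  by rewrite -eq_w1v in Rw2v; case: (cov_no_between uw1 (cov_reach uw2) Rw2v).
case: (connect_stepP w2v) => [eq_w2v|[_ Rw2v]].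
  by rewrite -eq_w2v in Rw1v; case: (cov_no_between uw2 (cov_reach uw1) Rw1v).
have [//|w1_w2] := eqVneq w1 w2; exfalso.
have w2V := (cov_visible uw2).2.
case: (chain_comparable w1_sub w1v w2V _ (reach_connect Rw2v)); first by rewrite eq_sym.
  exact: cov_no_between uw1 (cov_reach uw2).
exact: cov_no_between uw2 (cov_reach uw1).
Qed.

Lemma chain_no_normal_between u c v w :
  C u c -> connect step c v -> vis w -> ~~ sub w -> R u w -> R w v -> False.
Proof.
move=> + /connectP[p + ->] wV w_nsub.
elim: p u c => [|y p IH] u c uc /=; first by move=> _; apply: cov_no_between uc.
case/andP=> cy yp Ruw Rwv; have /andP[c_sub Ccy] := cy.
have cv : connect step c (last y p).
  by apply/connectP; exists (y :: p) => //=; rewrite cy.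
have w_c : w != c by apply: contraNneq w_nsub => ->.
case: (chain_comparable c_sub cv wV w_c (reach_connect Rwv)) => [Rwc|Rcw].
  exact: cov_no_between uc Ruw Rwc.
exact: IH c y Ccy yp Rcw Rwv.
Qed.

Lemma chain_to_normal c : vis c -> exists2 e, e \in W & connect step c e.
Proof.
elim/(acyclic_ind (acyclic_rev reach_acyclic)): c => c IH cV.
have [c_sub|c_nsub] := boolP (sub c); last by exists c; rewrite ?mem_normW ?cV.
have [d cd _] := subdividing_child c_sub.
have [e eW de] := IH d (cov_reach cd) (cov_visible cd).2.
by exists e => //; apply: connect_trans (connect1 _) de; rewrite /= c_sub.
Qed.

(** * The normalisation *)

Lemma NtilP u v :
  reflect [/\ u \in W, v \in W & exists2 w, C u w & connect step w v] (Nt u v).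
Proof.
apply: (iffP and3P) => [[uW vW /existsP[w /andP[uw wv]]]|[uW vW [w uw wv]]].
  by split=> //; exists w.
by split=> //; apply/existsP; exists w; apply/andP.
Qed.

Lemma suppressed_path_nil u v : spath u [::] v = C u v.
Proof. by rewrite [LHS]andbT [LHS]andbT. Qed.

Lemma suppressed_path_cons u y q v :
  spath u (y :: q) v = [&& C u y, sub y & spath y q v].
Proof.
apply/andP/and3P=> [[/andP[uy yqv] /andP[y_sub q_sub]]|[uy y_sub /andP[yqv q_sub]]].
  by split=> //; apply/andP.
by split; apply/andP.
Qed.

Lemma suppressed_path_connect y q v : sub y -> spath y q v -> connect step y v.
Proof.
move=> y_sub /andP[yqv q_sub]; apply/connectP; exists (rcons q v); rewrite ?last_rcons //.
by rewrite path_rcons_src /= y_sub q_sub.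
Qed.

Lemma suppressed_path_chain u v :
  (exists q, spath u q v) <-> exists2 w, C u w & connect step w v.
Proof.
split=> [[[|w q]]|[w uw /connectP[s ws ->]]].
- by rewrite suppressed_path_nil => uv; exists v.
- rewrite suppressed_path_cons => /and3P[uw w_sub /(suppressed_path_connect w_sub)].
  by exists w.
case/lastP: s ws => [|s y] /=; first by exists [::]; rewrite suppressed_path_nil.
rewrite path_rcons_src last_rcons => /andP[/andP[w_sub s_sub] wsy].
by exists (w :: s); rewrite suppressed_path_cons /suppressed_path uw w_sub wsy.
Qed.

Lemma Ntil_suppressedP u v :
  reflect [/\ u \in W, v \in W & exists q, spath u q v] (Nt u v).
Proof.
by apply: (iffP (NtilP u v)) => -[uW vW /suppressed_path_chain uv].
Qed.

Lemma suppressed_path_rcons u q p v :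
  spath u q p -> sub p -> C p v -> spath u (rcons q p) v.
Proof.
case/andP=> uqp q_sub p_sub pv.
by rewrite /suppressed_path rcons_path last_rcons uqp pv all_rcons p_sub q_sub.
Qed.

Lemma Ntil_reach : subrel Nt R.
Proof.
move=> u v /NtilP[_ _ [w /cov_reach Ruw /connect_step_reach[<- //|]]].
exact: reach_trans Ruw.
Qed.

Lemma cov_parent_exists v : vis v -> v != r -> exists p, C p v.
Proof.
move=> vV v_r; have Rrv : R r v.
  by apply/reachP; rewrite eq_sym visible_root vV v_r connect_from_root.
by have [p pv _] := cov_last_step Rrv; exists p.
Qed.

Lemma cov_child_exists v : vis v -> v != r -> v \notin X -> exists c, C v c.
Proof.
move=> vV v_r vX; have [x vx] := visible_viaP vV v_r.
have Rvx : R v x.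
  apply/reachP; split; [done|exact: visible_leaf vx.1| |exact: visible_via_connect].
  by apply: contraNneq vX => ->; apply: vx.1.
by have [c vc _] := cov_first_step Rvx; exists c.
Qed.

Lemma suppressed_path_via_parent p v :
  C p v -> exists e q, [/\ e \in W, spath e q v & last e q = p].
Proof.
elim/(acyclic_ind reach_acyclic): p v => p IH v pv.
have [p_sub|p_nsub] := boolP (sub p); last first.
  by exists p, [::]; rewrite suppressed_path_nil mem_normW p_nsub (cov_visible pv).1.
have [p' p'p _] := subdividing_parent p_sub.
have [e [q [eW eqp q_last]]] := IH p' (cov_reach p'p) p p'p.
exists e, (rcons q p); rewrite last_rcons; split=> //.
exact: suppressed_path_rcons.
Qed.

Lemma Ntil_parent_exists v : v \in W -> v != r -> exists e, Nt e v.
Proof.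
move=> vW v_r; have [p pv] := cov_parent_exists (normW_visible vW) v_r.
have [e [q [eW eqv _]]] := suppressed_path_via_parent pv.
by exists e; apply/Ntil_suppressedP; split=> //; exists q.
Qed.

Lemma suppressed_path_det_from u q1 q2 v1 v2 :
  (forall w w', C u w -> C u w' -> w = w') -> spath u q1 v1 -> spath u q2 v2 ->
  ~~ sub v1 -> ~~ sub v2 -> q1 = q2 /\ v1 = v2.
Proof.
move=> u_det /andP[uqv1 q1_sub] /andP[uqv2 q2_sub].
have det : {in u :: q1, forall a b b', C a b -> C a b' -> b = b'}.
  move=> a /predU1P[-> //|/(allP q1_sub)].
  by case/subdividing_child=> c _ c_uniq b b' /c_uniq-> /c_uniq->.
exact: path_determined det uqv1 uqv2 q1_sub q2_sub.
Qed.

Lemma suppressed_path_det_to u1 u2 q1 q2 v :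
  (forall w w', C w v -> C w' v -> w = w') -> spath u1 q1 v -> spath u2 q2 v ->
  ~~ sub u1 -> ~~ sub u2 -> q1 = q2 /\ u1 = u2.
Proof.
move=> v_det /andP[uqv1 q1_sub] /andP[uqv2 q2_sub] u1_nsub u2_nsub.
rewrite path_rcons_rev in uqv1; rewrite path_rcons_rev in uqv2.
have det : {in v :: rev q1, forall a b b', C b a -> C b' a -> b = b'}.
  move=> a; rewrite inE mem_rev => /predU1P[-> //|/(allP q1_sub)].
  by case/subdividing_parent=> p _ p_uniq b b' /p_uniq-> /p_uniq->.
rewrite -all_rev in q1_sub; rewrite -all_rev in q2_sub.
by have [/(can_inj revK)] := path_determined det uqv1 uqv2 q1_sub q2_sub u1_nsub u2_nsub.
Qed.

Lemma suppressed_path_uniq u q1 q2 v : v \in W -> spath u q1 v -> spath u q2 v -> q1 = q2.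
Proof.
move=> vW; have v_nsub := normW_not_subdividing vW.
have first_step y q : spath u (y :: q) v -> [/\ C u y, sub y & connect step y v].
  rewrite suppressed_path_cons => /and3P[uy y_sub yqv]; split=> //.
  exact: suppressed_path_connect yqv.
have not_direct y q : spath u (y :: q) v -> C u v -> False.
  case/first_step=> uy y_sub yv uv.
  by rewrite (cov_chains_merge uv uy (connect0 _ v) yv) y_sub in v_nsub.
case: q1 q2 => [|y1 q1] [|y2 q2] // uqv1 uqv2.
- by case: (not_direct _ _ uqv2); rewrite -suppressed_path_nil.
- by case: (not_direct _ _ uqv1); rewrite -suppressed_path_nil.
have [uy1 y1_sub y1v] := first_step _ _ uqv1.
have [uy2 _ y2v] := first_step _ _ uqv2.
move: uqv1 uqv2; rewrite (cov_chains_merge uy1 uy2 y1v y2v) !suppressed_path_cons.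
case/and3P=> _ y2_sub sp1 /and3P[_ _ sp2].
have [c _ c_uniq] := subdividing_child y2_sub.
have y2_det w w' : C y2 w -> C y2 w' -> w = w' by move=> /c_uniq-> /c_uniq->.
by have [->] := suppressed_path_det_from y2_det sp1 sp2 v_nsub v_nsub.
Qed.

Lemma Ntil_indeg1 v : v \in W -> v != r -> indeg C v = 1 -> indeg Nt v = 1.
Proof.
move=> vW v_r /eqP/indeg1P[p _ p_uniq]; have [e ev] := Ntil_parent_exists vW v_r.
apply/eqP/indeg1P; exists e => // e' /Ntil_suppressedP[e'W _ [q' e'q'v]].
case/Ntil_suppressedP: ev => eW _ [q eqv].
have v_det w w' : C w v -> C w' v -> w = w' by move=> /p_uniq-> /p_uniq->.
by have [] := suppressed_path_det_to v_det e'q'v eqv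
  (normW_not_subdividing e'W) (normW_not_subdividing eW).
Qed.

Lemma Ntil_outdeg1 v : v \in W -> outdeg C v = 1 -> outdeg Nt v = 1.
Proof.
move=> vW /eqP/outdeg1P[c vc c_uniq].
have [e eW ce] := chain_to_normal (cov_visible vc).2.
apply/eqP/outdeg1P; exists e; first by apply/NtilP; split=> //; exists c.
move=> e' /Ntil_suppressedP[_ e'W [q' vq'e']].
have [q vqe] : exists q, spath v q e by apply/suppressed_path_chain; exists c.
have v_det w w' : C v w -> C v w' -> w = w' by move=> /c_uniq-> /c_uniq->.
by have [] := suppressed_path_det_from v_det vq'e' vqe
  (normW_not_subdividing e'W) (normW_not_subdividing eW).
Qed.

Lemma Ntil_indeg_gt1 v : v \in W -> 1 < indeg C v -> 1 < indeg Nt v.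
Proof.
move=> vW /indeg_gt1P[p1 [p2 [p1v p2v p1_p2]]].
have [e1 [q1 [e1W e1v q1_last]]] := suppressed_path_via_parent p1v.
have [e2 [q2 [e2W e2v q2_last]]] := suppressed_path_via_parent p2v.
apply/indeg_gt1P; exists e1, e2; split.
- by apply/Ntil_suppressedP; split=> //; exists q1.
- by apply/Ntil_suppressedP; split=> //; exists q2.
apply: contra_neq p1_p2 => eq_e; rewrite -eq_e in e2v q2_last.
by rewrite -q1_last -q2_last (suppressed_path_uniq vW e1v e2v).
Qed.

Lemma Ntil_outdeg_gt1 v : v \in W -> 1 < outdeg C v -> 1 < outdeg Nt v.
Proof.
move=> vW /outdeg_gt1P[c1 [c2 [vc1 vc2 c1_c2]]].
have [e1 e1W c1e1] := chain_to_normal (cov_visible vc1).2.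
have [e2 e2W c2e2] := chain_to_normal (cov_visible vc2).2.
apply/outdeg_gt1P; exists e1, e2; split.
- by apply/NtilP; split=> //; exists c1.
- by apply/NtilP; split=> //; exists c2.
apply: contra_neq c1_c2 => eq_e; rewrite -eq_e in c2e2.
exact: cov_chains_merge vc1 vc2 c1e1 c2e2.
Qed.

Lemma cov_indeg1 v : indeg E v = 1 -> vis v -> v != r -> indeg C v = 1.
Proof.
move=> /eqP/indeg1P[p pv p_uniq] vV v_r.
have pV : vis p.
  have [-> | p_r] := eqVneq p r; first exact: visible_root.
  have [x [xX vx]] := visible_viaP vV v_r.
  apply: (@visible_via_visible p x); split=> // s rs s_last.
  have [u us uv] := path_mem_in_arc rs (vx s rs s_last) v_r.
  by rewrite -(p_uniq _ uv).
have Rpv : R p v.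
  apply/reachP; split; rewrite ?connect1 //.
  by apply: contraTneq (network_acyclic pv) => ->; rewrite connect0.
have below_p u : R u v -> u = p \/ R u p.
  case/reachP=> uV _ u_v /connect_last_step/(_ u_v)[w uw /p_uniq wp].
  rewrite wp in uw; have [-> | u_p] := eqVneq u p; [by left | right].
  by apply/reachP.
apply/eqP/indeg1P; exists p.
  apply: (cov_intro Rpv) => w Rpw /below_p[wp|Rwp]; first by rewrite wp reach_irr in Rpw.
  by move: (reach_trans Rpw Rwp); rewrite reach_irr.
by move=> u uv; case: (below_p u (cov_reach uv)) => // Rup; case: (cov_no_between uv Rup Rpv).
Qed.

Lemma cov_outdeg1 v : outdeg E v = 1 -> vis v -> v \notin X -> v != r -> outdeg C v = 1.
Proof.
move=> /eqP/outdeg1P[c vc c_uniq] vV vX v_r.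
have [x [xX vx]] := visible_viaP vV v_r.
have cV : vis c.
  apply: (@visible_via_visible c x); split=> // s rs s_last.
  have v_last : v != last r s by rewrite s_last; apply: contraNneq vX => ->.
  have [w ws vw] := path_mem_out_arc rs (vx s rs s_last) v_last.
  by rewrite -(c_uniq _ vw) inE ws orbT.
have Rvc : R v c.
  apply/reachP; split; rewrite ?connect1 //.
  by apply: contraTneq (network_acyclic vc) => <-; rewrite connect0.
have above_c w : R v w -> w = c \/ R c w.
  case/reachP=> _ wV v_w /connect_first_step/(_ v_w)[y /c_uniq yc yw].
  rewrite yc in yw; have [-> | c_w] := eqVneq c w; [by left | right].
  by apply/reachP.
apply/eqP/outdeg1P; exists c.
  apply: (cov_intro Rvc) => w Rvw Rwc; case: (above_c w Rvw) => [wc|Rcw].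
    by rewrite wc reach_irr in Rwc.
  by move: (reach_trans Rcw Rwc); rewrite reach_irr.
by move=> w vw; case: (above_c w (cov_reach vw)) => // Rcw; case: (cov_no_between vw Rvc Rcw).
Qed.

Lemma Ntil_leaf v : v \in W -> v != r -> indeg E v = 1 -> outdeg E v = 0 ->
  indeg Nt v = 1 /\ outdeg Nt v = 0.
Proof.
move=> vW v_r vin /eqP/outdeg0P v_sink; split.
  exact/(Ntil_indeg1 vW v_r)/cov_indeg1/v_r/normW_visible.
by apply/eqP/outdeg0P => w; apply/negP => /Ntil_reach; rewrite reach_from_sink.
Qed.

Lemma Ntil_tree_vertex v : v \in W -> v != r -> indeg E v = 1 -> 1 < outdeg E v ->
  indeg Nt v = 1 /\ 1 < outdeg Nt v.
Proof.
move=> vW v_r vin vout; have vV := normW_visible vW.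
have vC := cov_indeg1 vin vV v_r; split; first exact: Ntil_indeg1.
have vX : v \notin X by apply: contraTN vout => /leaf_degrees[_ ->].
apply: Ntil_outdeg_gt1 => //.
have [c vc] := cov_child_exists vV v_r vX.
have : outdeg C v != 1 by move: (normW_not_subdividing vW); rewrite /subdividing vC.
by rewrite ltn_neqAle eq_sym => -> /=; apply/outdeg_gt0P; exists c.
Qed.

Lemma Ntil_reticulation v : v \in W -> v != r -> outdeg E v = 1 -> 1 < indeg E v ->
  outdeg Nt v = 1 /\ 1 < indeg Nt v.
Proof.
move=> vW v_r vout vin; have vV := normW_visible vW.
have vX : v \notin X by apply: contraTN vin => /leaf_degrees[-> _].
have vC := cov_outdeg1 vout vV vX v_r; split; first exact: Ntil_outdeg1.
apply: Ntil_indeg_gt1 => //; have [p pv] := cov_parent_exists vV v_r.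
have : indeg C v != 1 by move: (normW_not_subdividing vW); rewrite /subdividing vC andbT.
by rewrite ltn_neqAle eq_sym => -> /=; apply/indeg_gt0P; exists p.
Qed.

Lemma Ntil_no_shortcuts : no_shortcuts Nt.
Proof.
move=> u v /NtilP[_ _ [c uc cv]]; apply/existsPn => w; apply/existsPn => w'.
apply/negP => /and3P[uw ww' w'v]; have [w'W _ _] := NtilP _ _ w'v.
have Ruw' : R u w'.
  case: (connect_sub_strict reach_trans Ntil_reach ww') => [<-|].
    exact: Ntil_reach uw.
  exact: reach_trans (Ntil_reach uw).
exact: chain_no_normal_between uc cv (normW_visible w'W) (normW_not_subdividing w'W)
  Ruw' (Ntil_reach w'v).
Qed.

Lemma Ntil_leaves v : v \in X <-> [/\ v \in W, v != r, indeg Nt v = 1 & outdeg Nt v = 0].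
Proof.
split=> [vX|[vW v_r _ vout]].
  have [[vin vout] v_r] := (leaf_degrees vX, leaf_neq_root vX).
  have vW : v \in W by rewrite mem_normW visible_leaf ?leaf_not_subdividing.
  by have [] := Ntil_leaf vW v_r vin vout.
apply/negPn/negP => vX; have [c vc] := cov_child_exists (normW_visible vW) v_r vX.
have [e eW ce] := chain_to_normal (cov_visible vc).2.
have ve : Nt v e by apply/NtilP; split=> //; exists c.
by move/eqP/outdeg0P: vout => /(_ e); rewrite ve.
Qed.

Lemma Ntil_network : network W Nt X r.
Proof.
split.
- by move=> u v /NtilP[-> ->].
- exact: acyclic_sub Ntil_reach reach_acyclic.
- split; first by rewrite mem_normW visible_root root_not_subdividing.
  by apply/eqP/indeg0P => u; apply/negP => /Ntil_reach; rewrite reach_to_root.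
- move=> v vW v_r; case: HN => _ _ _ /(_ v (in_setT v) v_r) + _.
  case=> [[vin vout]|[vin vout]|[vout vin]].
  + by apply: Or31; apply: Ntil_leaf.
  + by apply: Or32; apply: Ntil_tree_vertex.
  + by apply: Or33; apply: Ntil_reticulation.
exact: Ntil_leaves.
Qed.

End Normalisation.

Theorem lemma2 (V : finType) (E : rel V) (X : {set V}) (r : V)
  (HN : network [set: V] E X r) :
  (* (a) *) no_shortcuts (Ntil E X r) /\
  (* (b) *) network (normW E X r) (Ntil E X r) X r /\
  (* (b), simplicity: suppression creates no parallel arcs *)
  (forall u v q1 q2, u \in normW E X r -> v \in normW E X r ->
     suppressed_path E X r u q1 v -> suppressed_path E X r u q2 v -> q1 = q2).
Proof.
split; first exact: Ntil_no_shortcuts.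
split; first exact: Ntil_network.
by move=> u v q1 q2 _; apply: suppressed_path_uniq.
Qed.
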